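(* Let $A$ be an associative algebra over a field $\mathbf{k}$ with identity $1$, let $q\in A$ be an idempotent, and let $(A,q):=\{x\in A \mid qxq=qx\}$. For $a\in (A,q)$ let $a_L:(A,q)\to (A,q)$ be left multiplication, $a_L(x):=ax$. Put $W:=(A,q)^{ann}:=\{qx-x\mid x\in (A,q)\}$ and $q_L$ := left multiplication by $q$ on $(A,q)$. Then $q_L$ is a $W$-idempotent of $End((A,q))$, and the map $\phi:(A,q)\to (End((A,q)),q_L)$, $\phi(a)=a_L$, is an injective invariant homomorphism from the invariant algebra $(A,q)$ to the linear invariant algebra $(End((A,q)),q_L)$ over the vector space $(A,q)$ induced by the $W$-idempotent $q_L$.
   Context: All associative algebras have an identity and algebra homomorphisms preserve it. For an associative algebra $A$ with idempotent $q$, the (right) invariant algebra induced by $q$ is $(A,q):=\{x\in A\mid qxq=qx\}$; it is a subalgebra of $A$ containing $1$ and $q$. For a vector space $V$ with subspace $W$, a $W$-idempotent is a linear map $q:V\to V$ with $q(W)=0$ and $q(v)-v\in W$ for all $v\in V$; the linear invariant algebra over $V$ induced by $q$ is $(End(V),q)=\{f\in End(V)\mid qfq=qf\}$ (equivalently, the linear maps $f$ with $f(W)\subseteq W$). For invariant algebras $(A,q_A)$ and $(B,q_B)$, an invariant homomorphism is a linear map $\phi:(A,q_A)\to(B,q_B)$ with $\phi(xy)=\phi(x)\phi(y)$ for all $x,y$, $\phi(1_A)=1_B$ and $\phi(q_A)=q_B$. *)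

From HB Require Import structures.
From mathcomp Require Import all_boot all_algebra.
Set Implicit Arguments. Unset Strict Implicit. Unset Printing Implicit Defensive.
Import GRing.Theory.
Local Open Scope ring_scope.

Section InvariantAlgebra.
Variables (K : fieldType) (A : algType K) (q : A).

Definition inv_pred : A -> bool := fun x => q * x * q == q * x.

Lemma inv_pred_submod : subsemimod_closed inv_pred.
Proof.
have H : forall x : A, (x \in inv_pred) = (q * x * q == q * x) by [].
split; first split.
- by rewrite H mulr0 mul0r.
- move=> u v; rewrite !H => /eqP Hu /eqP Hv; apply/eqP.
  by rewrite mulrDr mulrDl Hu Hv.
- move=> a u; rewrite !H => /eqP Hu; apply/eqP.
  by rewrite -scalerAr -scalerAl Hu scalerAr.
Qed.

HB.instance Definition _ := GRing.isSubmodClosed.Build K A inv_pred inv_pred_submod.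

Record invalg := InvAlg { ival :> A; ivalP : inv_pred ival }.
HB.instance Definition _ := [isSub for ival].
HB.instance Definition _ := [Choice of invalg by <:].
HB.instance Definition _ := [SubChoice_isSubLmodule of invalg by <:].

Lemma inv_pred_mul (x y : invalg) : inv_pred (val x * val y).
Proof.
case: x y => x /eqP Hx [y /eqP Hy] /=; apply/eqP.
have Hy' : q * (y * q) = q * y by rewrite mulrA.
have -> : q * (x * y) * q = (q * x * q) * (y * q) by rewrite Hx !mulrA.
by rewrite -!mulrA Hy' !mulrA Hx.
Qed.

Definition inv_mul (x y : invalg) : invalg := InvAlg (inv_pred_mul x y).

Definition lmul (a : invalg) : invalg -> invalg := fun x => inv_mul a x.

Section Idempotent.
Variable (hq : q * q = q).

Lemma inv_pred_q : inv_pred q.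
Proof. by rewrite /inv_pred hq; apply/eqP. Qed.

Lemma inv_pred_1 : inv_pred 1.
Proof. by rewrite /inv_pred mulr1 hq; apply/eqP. Qed.

Definition qelt : invalg := InvAlg inv_pred_q.
Definition oneelt : invalg := InvAlg inv_pred_1.

Definition qL : invalg -> invalg := lmul qelt.

End Idempotent.

Definition Wann (w : invalg) : Prop :=
  exists x : invalg, val w = q * val x - val x.


End InvariantAlgebra.

Definition is_subspace (K : fieldType) (V : lmodType K) (W : V -> Prop) : Prop :=
  W 0 /\ forall (a : K) (u v : V), W u -> W v -> W (a *: u + v).

Definition W_idempotent (K : fieldType) (V : lmodType K) (W : V -> Prop)
  (p : V -> V) : Prop :=
  linear p /\ (forall w, W w -> p w = 0) /\ (forall v, W (p v - v)).

Definition in_lin_inv_alg (K : fieldType) (V : lmodType K) (p : V -> V)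
  (f : V -> V) : Prop :=
  linear f /\ p \o f \o p =1 p \o f.

From HB Require Import structures.
From mathcomp Require Import all_boot all_algebra.
Import GRing.Theory.
Local Open Scope ring_scope.

(* Everything is inherited from the algebra A through the injection [val]:
   left multiplication is linear in both arguments and associative, hence
   [a |-> a_L] is a linear, multiplicative, unital map, injective because
   [a_L 1 = a].  The invariance [q_L a_L q_L = q_L a_L] is the defining
   identity [q a q = q a] of (A,q) multiplied on the right, and [q_L] is a
   [W]-idempotent because [q (q x - x) = 0] for idempotent [q]. *)

Section LeftMultiplication.
Variables (K : fieldType) (A : algType K) (q : A).

Lemma val_lmul (a x : invalg q) : val (lmul a x) = val a * val x.
Proof. by []. Qed.

Lemma Wann_subspace : is_subspace (@Wann K A q).
Proof.
split; first by exists 0; rewrite /= mulr0 subr0.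
move=> k u v [x Wu] [y Wv]; exists (k *: x + y).
by rewrite /= Wu Wv mulrDr -scalerAr scalerBr addrACA opprD.
Qed.

Lemma lmul_linear (a : invalg q) : linear (lmul a).
Proof. by move=> k u v; apply: val_inj; rewrite /= mulrDr -scalerAr. Qed.

Lemma lmulZD (k : K) (a b : invalg q) :
  lmul (k *: a + b) =1 (fun x => k *: lmul a x + lmul b x).
Proof. by move=> x; apply: val_inj; rewrite /= mulrDl -scalerAl. Qed.

Lemma lmulM (a b : invalg q) : lmul (inv_mul a b) =1 lmul a \o lmul b.
Proof. by move=> x; apply: val_inj; rewrite /= mulrA. Qed.

Variable hq : q * q = q.

Lemma lmul1 : lmul (oneelt hq) =1 id.
Proof. by move=> x; apply: val_inj; rewrite /= mul1r. Qed.

Lemma lmul_inj (a b : invalg q) : lmul a =1 lmul b -> a = b.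
Proof.
by move=> /(_ (oneelt hq)) /(congr1 val); rewrite !val_lmul /= !mulr1 => /val_inj.
Qed.

Lemma qL_W_idempotent : W_idempotent (@Wann K A q) (qL hq).
Proof.
split; first exact: lmul_linear.
split; last by move=> v; exists v.
by move=> w [x Wx]; apply: val_inj; rewrite val_lmul Wx /= mulrBr mulrA hq subrr.
Qed.

Lemma lmul_in_lin_inv_alg (a : invalg q) : in_lin_inv_alg (qL hq) (lmul a).
Proof.
split; first exact: lmul_linear.
by move=> x; apply: val_inj; rewrite /= !mulrA (eqP (ivalP a)).
Qed.

End LeftMultiplication.

Theorem proposition1p1 (K : fieldType) (A : algType K) (q : A)
  (hq : q * q = q) :
  is_subspace (@Wann K A q)
  /\ W_idempotent (@Wann K A q) (qL hq)
  /\ (forall a : invalg q, in_lin_inv_alg (qL hq) (lmul a))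
  /\ (forall (k : K) (a b : invalg q),
        lmul (k *: a + b) =1 (fun x => k *: lmul a x + lmul b x))
  /\ (forall a b : invalg q, lmul (inv_mul a b) =1 lmul a \o lmul b)
  /\ lmul (oneelt hq) =1 id
  /\ lmul (qelt hq) =1 qL hq
  /\ (forall a b : invalg q, lmul a =1 lmul b -> a = b).
Proof.
split; first exact: Wann_subspace.
split; first exact: qL_W_idempotent.
split; first exact: lmul_in_lin_inv_alg.
split; first exact: lmulZD.
split; first exact: lmulM.
split; first exact: lmul1.
split; first by [].
exact: lmul_inj.
Qed.
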